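(* For every prime $p$, the polynomial ring $\mathbb{Z}_p[x]$ in one variable over the prime field $\mathbb{Z}_p$ is finitely separable.
   Context: A ring $R$ is finitely separable if for every $r\in R$ and every subring $A\subseteq R$ (not necessarily containing $1$) with $r\notin A$ there exist a finite ring $F$ and a ring homomorphism $\varphi:R\to F$ with $\varphi(r)\notin\varphi(A)$. *)

From HB Require Import structures.
From mathcomp Require Import all_boot all_order all_algebra.
Set Implicit Arguments. Unset Strict Implicit. Unset Printing Implicit Defensive.
Import GRing.Theory.
Local Open Scope ring_scope.

Definition nonunital_subring (R : pzRingType) (A : pred R) : Prop :=
  [/\ 0 \in A,
      {in A &, forall x y, x - y \in A} &
      {in A &, forall x y, x * y \in A}].

Definition finitely_separable (R : pzRingType) : Prop :=
  forall (r : R) (A : pred R), nonunital_subring A -> r \notin A ->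
    exists (F : finPzRingType) (phi : {rmorphism R -> F}),
      ~ (exists2 a, a \in A & phi a = phi r).

From HB Require Import structures.
From mathcomp Require Import all_boot all_order all_algebra.
From mathcomp Require Import boolp classical_sets.
From mathcomp Require Import zify ring.
Import GRing.Theory.

Local Open Scope ring_scope.

(* If every element of [A] is constant, [r] is separated from [A] modulo a
   large power of [X].  Otherwise [A] contains a nonconstant [a] and is a
   module over [F_p[a]].  By Zorn's lemma some maximal [F_p[a]]-submodule [N]
   contains [A] but not [r]; maximality makes every polynomial torsion modulo
   [N].  As [F_p[x]] is finitely generated over [F_p[a]], one nonzero [u] in
   [F_p[a]] kills [F_p[x]] modulo [N], so the ideal [(a u)] lies in [N] and
   the finite ring [F_p[x]/(a u)] separates [r] from [A]. *)

Definition fin_qpoly {R : finComNzRingType} (H : {poly R}) := {poly %/ H}.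
HB.instance Definition _ R H := GRing.ComNzRing.on (@fin_qpoly R H).
HB.instance Definition _ R H := Finite.on (@fin_qpoly R H).

Section SeparationModMonic.
Variable R : finComNzRingType.
Implicit Types (A : pred {poly R}) (f g r H : {poly R}).

Lemma in_qpoly_eq H f g : H \is monic -> (1 < size H)%N ->
  in_qpoly H f = in_qpoly H g -> exists q, f = g + q * H.
Proof.
move=> H_monic H_gt1 /(congr1 val) /=.
have -> : mk_monic H = H by rewrite /mk_monic H_gt1 H_monic.
move=> eq_mod; exists (Pdiv.Ring.rdivp f H - Pdiv.Ring.rdivp g H).
rewrite {1}(Pdiv.RingMonic.rdivp_eq H_monic f).
rewrite {1}(Pdiv.RingMonic.rdivp_eq H_monic g).
rewrite eq_mod; ring.
Qed.

Lemma separated_mod_monic A r H : H \is monic -> (1 < size H)%N ->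
  (forall a q, a \in A -> r <> a + q * H) ->
  exists (F : finPzRingType) (phi : {rmorphism {poly R} -> F}),
    ~ (exists2 a, a \in A & phi a = phi r).
Proof.
move=> H_monic H_gt1 H_sep; exists (fin_qpoly H), (in_qpoly H).
by case=> a aA /esym /(in_qpoly_eq _ _ _ H_monic H_gt1) [q]; apply: H_sep.
Qed.

Lemma separated_from_constants A r : r \notin A ->
  {in A, forall a : {poly R}, (size a <= 1)%N} ->
  exists (F : finPzRingType) (phi : {rmorphism {poly R} -> F}),
    ~ (exists2 a, a \in A & phi a = phi r).
Proof.
move=> rA A_const; apply: (separated_mod_monic A r 'X^((size r).+1)).
- exact: monicXn.
- by rewrite size_polyXn.
move=> a q aA r_eq.
have [q0 | q_neq0] := eqVneq q 0.
  by rewrite r_eq q0 mul0r addr0 aA in rA.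
have : size (r - a) = size (q * 'X^((size r).+1)).
  by rewrite {1}r_eq addrC addKr.
rewrite size_mulXn // => size_eq.
have : (size (r - a)%R <= maxn (size r) 1)%N.
  rewrite (leq_trans (size_polyD _ _)) // size_polyN geq_max leq_maxl.
  exact: leq_trans (A_const a aA) (leq_maxr _ _).
rewrite size_eq; have := size_poly_gt0 q; rewrite q_neq0; lia.
Qed.

End SeparationModMonic.

Section PolynomialsInA.
Context {p : nat} (a : {poly 'F_p}).
Local Notation B := {poly 'F_p}.

Definition poly_in (c : B) : Prop := exists q : B, c = q \Po a.

Lemma poly_inC k : poly_in k%:P.
Proof. by exists k%:P; rewrite comp_polyC. Qed.

Lemma poly_in0 : poly_in 0.
Proof. by rewrite -polyC0; apply: poly_inC. Qed.

Lemma poly_in1 : poly_in 1.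
Proof. by rewrite -polyC1; apply: poly_inC. Qed.

Lemma poly_in_self : poly_in a.
Proof. by exists 'X; rewrite comp_polyX. Qed.

Lemma poly_inB c d : poly_in c -> poly_in d -> poly_in (c - d).
Proof. by move=> [q ->] [q' ->]; exists (q - q'); rewrite comp_polyB. Qed.

Lemma poly_inM c d : poly_in c -> poly_in d -> poly_in (c * d).
Proof. by move=> [q ->] [q' ->]; exists (q * q'); rewrite comp_polyM. Qed.

Definition submodule (S : B -> Prop) :=
  [/\ S 0, forall x y, S x -> S y -> S (x - y)
    & forall c x, poly_in c -> S x -> S (c * x)].

Lemma submoduleD S x y : submodule S -> S x -> S y -> S (x + y).
Proof.
case=> S0 SB _ Sx Sy; rewrite -[y]opprK; apply: (SB) => //.
by rewrite -sub0r; apply: SB.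
Qed.

Lemma submodule_mull S c : submodule S -> submodule (fun x => S (c * x)).
Proof.
case=> S0 SB SM; split=> [|x y Sx Sy|d x d_in Sx] /=; first by rewrite mulr0.
- by rewrite mulrBr; apply: SB.
- by rewrite mulrCA; apply: SM.
Qed.

Lemma nonunital_subring_submodule (A : pred B) :
  nonunital_subring A -> a \in A -> submodule (fun x => x \in A).
Proof.
case=> A0 AB AM aA; have AD x y : x \in A -> y \in A -> x + y \in A.
  by move=> xA yA; rewrite -[y]opprK; apply: (AB); rewrite // -sub0r AB.
split=> // _ x [q ->]; elim/poly_ind: q x => [|q k IHq] x xA.
  by rewrite comp_poly0 mul0r.
rewrite comp_polyD comp_polyM comp_polyX comp_polyC mulrDl -mulrA.
apply: (AD); first by apply: IHq; apply: AM.
(* the scalars of [F_p] act on [A] as integer multiples *)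
rewrite -(natr_Zp k) polyC_natr mulr_natl.
by elim: (k : nat) => [|n IHn]; rewrite ?mulr0n // mulrS AD.
Qed.

Hypothesis a_nonconst : (1 < size a)%N.

Lemma submodule_generated S : submodule S ->
  (forall i, (i < (size a).-1)%N -> S 'X^i) -> forall f, S f.
Proof.
move=> S_sub S_low f; have [n] := ubnP (size f); elim: n f => // n IHn f f_lt.
have a_neq0 : a != 0 by rewrite -size_poly_gt0 ltnW.
have [-> | f_neq0] := eqVneq f 0; first by case: S_sub.
case: (S_sub) => _ _ SM; rewrite (divp_eq f a) mulrC; apply: submoduleD => //.
  apply: SM; first exact: poly_in_self.
  apply: IHn; rewrite size_divp // -ltnS (leq_trans _ f_lt) // ltnS ltn_subrL.
  by rewrite -subn1 subn_gt0 a_nonconst size_poly_gt0.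
have : (size (f %% a)%R <= (size a).-1)%N.
  by rewrite -ltnS prednK ?ltn_modp // ltnW.
move: (f %% a) => g g_small; rewrite -[g]coefK poly_def.
apply: (big_ind S) => [|x y|i _]; first by case: S_sub.
  exact: submoduleD.
rewrite -mul_polyC; apply: SM; first exact: poly_inC.
by apply: S_low; apply: leq_trans g_small.
Qed.

End PolynomialsInA.

Section MaximalAvoiding.
Context {p : nat} (a : {poly 'F_p}) (A : pred {poly 'F_p}) (r : {poly 'F_p}).
Local Notation B := {poly 'F_p}.

Definition avoiding (S : B -> Prop) :=
  [/\ submodule a S, forall x, x \in A -> S x & ~ S r].

Definition maximal_avoiding (N : B -> Prop) :=
  avoiding N /\
  forall S, avoiding S -> (N `<=` S)%classic -> (S `<=` N)%classic.

Lemma exists_maximal_avoiding :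
  avoiding (fun x => x \in A) -> exists N, maximal_avoiding N.
Proof.
move=> A_avoid; have [F F_P F_tot|N [N_P N_max]] :=
  @Zorn_bigcup B (fun S => S = set0 \/ avoiding S).
  have member_avoiding X x : F X -> X x -> avoiding X.
    by move=> FX Xx; case: (F_P X FX) => // X0; rewrite X0 in Xx.
  have [[X0 FX0 X0_avoid] | no_avoiding] :=
    pselect (exists2 X, F X & avoiding X); last first.
    left; apply/seteqP; split=> x // [X FX Xx].
    by apply: no_avoiding; exists X; last exact: member_avoiding Xx.
  right; split; first split.
  - by exists X0 => //; case: X0_avoid => -[].
  - move=> x y [X FX Xx] [Y FY Yy].
    have [XY | YX] := F_tot X Y FX FY.
      exists Y => //; case: (member_avoiding Y y FY Yy) => -[_ YB _] _ _.
      by apply: YB => //; apply: XY.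
    exists X => //; case: (member_avoiding X x FX Xx) => -[_ XB _] _ _.
    by apply: XB => //; apply: YX.
  - move=> c x c_in [X FX Xx]; exists X => //.
    by case: (member_avoiding X x FX Xx) => -[_ _ XM] _ _; apply: XM.
  - by move=> x xA; exists X0 => //; case: X0_avoid => _ AX0 _; apply: AX0.
  - by case=> X FX Xr; case: (member_avoiding X r FX Xr).
have N_avoid : avoiding N.
  case: N_P => // N0; exfalso; apply: (N_max (fun x => x \in A)); last by right.
  rewrite N0; split=> // A_empty; case: A_avoid => -[A0 _ _] _ _.
  exact: A_empty A0.
exists N; split=> // S S_avoid NS.
case: (pselect (S `<=` N)%classic) => // not_SN; exfalso.
by apply: (N_max S); [split | right].
Qed.

Section Maximal.
Variable N : B -> Prop.
Hypothesis N_max : maximal_avoiding N.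

Lemma maximal_avoiding_cover y : ~ N y ->
  exists n c, [/\ N n, poly_in a c & r = n + c * y].
Proof.
move=> Ny; apply: contrapT => no_cover.
have [[[N0 NB NM] AN Nr] N_max'] := N_max.
pose S z := exists n c, [/\ N n, poly_in a c & z = n + c * y].
have S_avoid : avoiding S.
  split; first split.
  - by exists 0, 0; split; [|exact: poly_in0|rewrite mul0r addr0].
  - move=> _ _ [n [c [Nn c_in ->]]] [n' [c' [Nn' c'_in ->]]].
    by exists (n - n'), (c - c'); split; [exact: NB|exact: poly_inB|ring].
  - move=> e _ e_in [n [c [Nn c_in ->]]].
    by exists (e * n), (e * c); split; [exact: NM|exact: poly_inM|ring].
  - by move=> x xA; exists x, 0; split; [exact: AN|exact: poly_in0|ring].
  - exact: no_cover.
apply: Ny; apply: (N_max' S S_avoid).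
- by move=> x Nx; exists x, 0; split; [|exact: poly_in0|ring].
- by exists 0, 1; split; [|exact: poly_in1|ring].
Qed.

Hypothesis a_nonconst : (1 < size a)%N.

Lemma maximal_avoiding_annihilator_r :
  exists u, [/\ poly_in a u, u != 0 & N (u * r)].
Proof.
have [Nar | not_Nar] := pselect (N (a * r)).
  by exists a; split; [exact: poly_in_self | rewrite -size_poly_gt0 ltnW |].
have [n [c [Nn c_in r_eq]]] := maximal_avoiding_cover _ not_Nar.
(* [r = n + c a r] gives [(1 - c a) r = n], and [c a <> 1] as [a] is no unit *)
exists (1 - c * a); split.
- apply: poly_inB; first exact: poly_in1.
  by apply: poly_inM => //; exact: poly_in_self.
- rewrite subr_eq0 eq_sym; apply/eqP => ca1.
  have : (a %| 1)%R by rewrite -ca1 dvdp_mull.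
  by move/(dvdp_leq (oner_neq0 _)); rewrite size_poly1 leqNgt a_nonconst.
- have -> : (1 - c * a) * r = r - c * (a * r) by ring.
  by rewrite {1}r_eq addrK.
Qed.

Lemma maximal_avoiding_torsion y :
  exists u, [/\ poly_in a u, u != 0 & N (u * y)].
Proof.
have [[[_ NB NM] _ Nr] _] := N_max.
have [u [u_in u_neq0 Nur]] := maximal_avoiding_annihilator_r.
have [Ny | not_Ny] := pselect (N y).
  by exists 1; split; [exact: poly_in1 | exact: oner_neq0 | rewrite mul1r].
have [n [c [Nn c_in r_eq]]] := maximal_avoiding_cover _ not_Ny.
have c_neq0 : c != 0 by apply/eqP => c0; apply: Nr; rewrite r_eq c0 mul0r addr0.
exists (u * c); split; [exact: poly_inM | exact: mulf_neq0 |].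
have -> : u * c * y = u * r - u * n by rewrite r_eq; ring.
by apply: NB => //; apply: NM.
Qed.

Lemma maximal_avoiding_uniform_annihilator :
  exists u, [/\ poly_in a u, u != 0 & forall f, N (u * f)].
Proof.
have [[N_sub _ _] _] := N_max.
suff [u [u_in u_neq0 u_low]] : exists u, [/\ poly_in a u, u != 0 &
    forall i, (i < (size a).-1)%N -> N (u * 'X^i)].
  exists u; split=> //.
  exact: (@submodule_generated p a a_nonconst _ (submodule_mull _ _ u N_sub)).
elim: (size a).-1 => [|m [u [u_in u_neq0 u_low]]].
  by exists 1; split; [exact: poly_in1 | exact: oner_neq0 |].
have [v [v_in v_neq0 Nv]] := maximal_avoiding_torsion 'X^m.
case: N_sub => _ _ NM.
exists (u * v); split; [exact: poly_inM | exact: mulf_neq0 |].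
move=> i; rewrite ltnS leq_eqVlt => /orP[/eqP -> | i_lt].
  by rewrite -mulrA; apply: NM.
by rewrite -mulrA mulrCA; apply: NM => //; apply: u_low.
Qed.

End Maximal.
End MaximalAvoiding.

Lemma separated_by_nonconstant {p} {A : pred {poly 'F_p}} {r a : {poly 'F_p}} :
  nonunital_subring A -> a \in A -> (1 < size a)%N -> r \notin A ->
  exists (F : finPzRingType) (phi : {rmorphism {poly 'F_p} -> F}),
    ~ (exists2 a, a \in A & phi a = phi r).
Proof.
move=> A_sub aA a_nonconst rA.
have A_avoid : avoiding a A r (fun x => x \in A).
  by split; [exact: nonunital_subring_submodule | | exact/negP].
have [N N_max] := exists_maximal_avoiding _ _ _ A_avoid.
have [u [u_in u_neq0 Nu]] :=
  maximal_avoiding_uniform_annihilator _ _ _ _ N_max a_nonconst.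
have [[N_sub AN Nr] _] := N_max.
(* the ideal [(a u)] lies in [N]; the factor [a] only makes it proper *)
pose H := a * u; pose c := (lead_coef H)^-1.
have a_neq0 : a != 0 by rewrite -size_poly_gt0 ltnW.
have H_neq0 : H != 0 by rewrite mulf_neq0.
apply: (separated_mod_monic _ A r (c *: H)).
- by rewrite monicE lead_coefZ mulVf ?lead_coef_eq0.
- rewrite size_scale ?invr_eq0 ?lead_coef_eq0 // size_mul //.
  by rewrite -subn1 -addnBA ?size_poly_gt0 // (leq_trans a_nonconst) ?leq_addr.
move=> b q bA r_eq; apply: Nr; rewrite r_eq.
apply: (submoduleD _ _ _ _ N_sub (AN _ bA)).
have -> : q * (c *: H) = (c%:P * a) * (u * q) by rewrite -mul_polyC /H; ring.
case: N_sub => _ _; apply; last exact: Nu.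
by apply: poly_inM; [exact: poly_inC | exact: poly_in_self].
Qed.

Theorem proposition6 (p : nat) (hp : prime p) :
  finitely_separable {poly 'F_p}.
Proof.
move=> r A A_sub rA.
have [[a aA a_nonconst] | A_const] :=
  pselect (exists2 a, a \in A & (1 < size a)%N).
  exact: (separated_by_nonconstant A_sub aA a_nonconst).
apply: separated_from_constants => // a aA; rewrite leqNgt.
by apply/negP => a_nonconst; apply: A_const; exists a.
Qed.
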